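(* Let $V\in\mathcal{H}^{r\times n}$ and $Y\in\mathcal{H}^{n\times r}$ be left and right canonical matrices, respectively, for $T$ at $\lambda_0$. Then $VTY$ is invertible (as a meromorphic matrix), and $\Delta^{-1}VTY\Delta^{-1}\doteq\Delta^{-1}$ holds if and only if $(VTY)^{-1}\doteq\Delta^{-1}$.
   Context: Let $\Omega\subset\mathbb{C}$ be open and $\lambda_0\in\Omega$ fixed. $\mathcal{H}$ denotes the ring of holomorphic functions on $\Omega$, and $\mathcal{H}_0$ the ring of functions holomorphic in some neighborhood of $\lambda_0$. Write $\chi_0(\lambda)=\lambda-\lambda_0$. A matrix $M\in\mathcal{H}_0^{n\times n}$ is unimodular if it has an inverse in $\mathcal{H}_0^{n\times n}$. For meromorphic matrices $M_1,M_2$ of equal size, $M_1\doteq M_2$ means that $M_2-M_1$ is holomorphic in a neighborhood of $\lambda_0$. Throughout, $T\in\mathcal{H}^{n\times n}$ with $\det T$ not identically zero and $\det T(\lambda_0)=0$, and $r=\dim\ker T(\lambda_0)$. There exist unimodular $U_L,U_R\in\mathcal{H}_0^{n\times n}$ and uniquely determined integers $m_1\ge\cdots\ge m_n\ge 0$ (the partial multiplicities) with $U_LTU_R=\mathrm{diag}(\chi_0^{m_1},\dots,\chi_0^{m_n})$; $m_i>0$ exactly for $i\le r$. Set $\Delta=\mathrm{diag}(\chi_0^{m_1},\dots,\chi_0^{m_r})$. A root function for $T$ at $\lambda_0$ is $y\in\mathcal{H}^n$ with $y(\lambda_0)\neq0$ and $T(\lambda_0)y(\lambda_0)=0$; its multiplicity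 $\nu(y)$ is the order of the zero of $Ty$ at $\lambda_0$. A right canonical matrix for $T$ at $\lambda_0$ is $Y\in\mathcal{H}^{n\times r}$ whose columns $y_1,\dots,y_r$ are root functions such that (a) $y_1(\lambda_0),\dots,y_r(\lambda_0)$ are linearly independent, (b) $\sum_{i=1}^r\nu(y_i)=\sum_{i=1}^r m_i$, (c) $\nu(y_1)\ge\cdots\ge\nu(y_r)$. A left root function is a row vector $v\in\mathcal{H}^{1\times n}$ with $v(\lambda_0)\ne0$ and $v(\lambda_0)T(\lambda_0)=0$, with multiplicity the order of the zero of $vT$ at $\lambda_0$; a left canonical matrix $V\in\mathcal{H}^{r\times n}$ is defined analogously. *)

(* The complex plane is modelled as R[i] for an arbitrary R : realType,
   viewed as a numFieldType (hence a normed module over itself, so that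
   [derivable f z 1] is complex differentiability at z). *)
From HB Require Import structures.
From mathcomp Require Import all_boot all_order all_algebra.
From mathcomp Require Import complex.
From mathcomp Require Import all_classical all_reals topology normedtype derive.
Set Implicit Arguments. Unset Strict Implicit. Unset Printing Implicit Defensive.
Import Order.TTheory GRing.Theory Num.Theory.
Import numFieldNormedType.Exports.
Local Open Scope ring_scope.

Definition Cx (R : realType) : numFieldType := R[i].

Section Defs.
Variable R : realType.
Local Notation C := (Cx R).

Definition holo_on (U : set C) p q (f : C -> 'M[C]_(p, q)) : Prop :=
  forall (i : 'I_p) (j : 'I_q) (z : C), U z ->
    derivable (fun w : C => f w i j) z 1.

Definition holo (Omega : set C) p q (f : C -> 'M[C]_(p, q)) : Prop :=
  holo_on Omega f.

Definition near_pt (l0 : C) (P : C -> Prop) : Prop :=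
  exists e : C, 0 < e /\ forall z : C, `|z - l0| < e -> P z.

Definition holo0 (l0 : C) p q (f : C -> 'M[C]_(p, q)) : Prop :=
  exists e : C, 0 < e /\ holo_on [set z | `|z - l0| < e] f.

Definition unimodular0 (l0 : C) n (U : C -> 'M[C]_n) : Prop :=
  holo0 l0 U /\
  exists Ui : C -> 'M[C]_n, holo0 l0 Ui /\
    near_pt l0 (fun z => U z *m Ui z = 1%:M /\ Ui z *m U z = 1%:M).

Definition chi0 (l0 : C) (z : C) : C := z - l0.

(* The integers m_0 >= ... >= m_{n-1} (0-based) are the partial
   multiplicities of T at l0: there are unimodular U_L, U_R in H_0^{n x n}
   with U_L T U_R = diag(chi_0^{m_0}, ..., chi_0^{m_{n-1}}). *)
Definition partial_multiplicities (l0 : C) n (T : C -> 'M[C]_n)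
    (m : nat -> nat) : Prop :=
  (forall i j : 'I_n, (i <= j)%N -> (m j <= m i)%N) /\
  exists UL UR : C -> 'M[C]_n,
    unimodular0 l0 UL /\ unimodular0 l0 UR /\
    near_pt l0 (fun z =>
      UL z *m T z *m UR z = diag_mx (\row_(i < n) chi0 l0 z ^+ m i)).

Definition zero_order (l0 : C) p q (f : C -> 'M[C]_(p, q)) (k : nat) : Prop :=
  exists g : C -> 'M[C]_(p, q), holo0 l0 g /\ g l0 != 0 /\
    near_pt l0 (fun z => f z = chi0 l0 z ^+ k *: g z).

Definition root_fun (Omega : set C) (l0 : C) n (T : C -> 'M[C]_n)
    (y : C -> 'cV[C]_n) : Prop :=
  holo Omega y /\ y l0 != 0 /\ T l0 *m y l0 = 0.

Definition left_root_fun (Omega : set C) (l0 : C) n (T : C -> 'M[C]_n)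
    (v : C -> 'rV[C]_n) : Prop :=
  holo Omega v /\ v l0 != 0 /\ v l0 *m T l0 = 0.

Definition right_canonical (Omega : set C) (l0 : C) n r
    (T : C -> 'M[C]_n) (m : nat -> nat) (Y : C -> 'M[C]_(n, r)) : Prop :=
  holo Omega Y /\
  (forall i : 'I_r, root_fun Omega l0 T (fun z => col i (Y z))) /\
  \rank (Y l0) = r /\
  exists nu : 'I_r -> nat,
    (forall i : 'I_r, zero_order l0 (fun z => T z *m col i (Y z)) (nu i)) /\
    (\sum_(i < r) nu i = \sum_(i < r) m i)%N /\
    (forall i j : 'I_r, (i <= j)%N -> (nu j <= nu i)%N).

Definition left_canonical (Omega : set C) (l0 : C) n r
    (T : C -> 'M[C]_n) (m : nat -> nat) (V : C -> 'M[C]_(r, n)) : Prop :=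
  holo Omega V /\
  (forall i : 'I_r, left_root_fun Omega l0 T (fun z => row i (V z))) /\
  \rank (V l0) = r /\
  exists nu : 'I_r -> nat,
    (forall i : 'I_r, zero_order l0 (fun z => row i (V z) *m T z) (nu i)) /\
    (\sum_(i < r) nu i = \sum_(i < r) m i)%N /\
    (forall i j : 'I_r, (i <= j)%N -> (nu j <= nu i)%N).

(* A square holomorphic matrix function M is invertible as a meromorphic
   matrix (germ at l0): det M does not vanish identically near l0. *)
Definition mero_invertible (l0 : C) r (M : C -> 'M[C]_r) : Prop :=
  ~ near_pt l0 (fun z => \det (M z) = 0).

(* M1 =. M2 : M2 - M1 is holomorphic in a neighbourhood of l0, i.e. agrees
   on a punctured disc around l0 with a function holomorphic on the disc.
   (Meromorphic matrices are represented by their values off the poles.) *)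
Definition mero_eq (l0 : C) p q (M1 M2 : C -> 'M[C]_(p, q)) : Prop :=
  exists e : C, 0 < e /\
  exists H : C -> 'M[C]_(p, q), holo_on [set z | `|z - l0| < e] H /\
    forall z : C, 0 < `|z - l0| < e -> M2 z - M1 z = H z.

Definition Delta_inv (l0 : C) r (m : nat -> nat) (z : C) : 'M[C]_r :=
  diag_mx (\row_(i < r) (chi0 l0 z ^+ m i)^-1).

End Defs.

From HB Require Import structures.
From mathcomp Require Import all_boot all_order all_algebra.
From mathcomp Require Import complex.
From mathcomp Require Import all_classical all_reals topology normedtype derive.
From mathcomp Require Import zify.
Import Order.TTheory GRing.Theory Num.Theory.
Import numFieldNormedType.Exports.
Local Open Scope ring_scope.
Local Open Scope classical_set_scope.
Set Implicit Arguments. Unset Strict Implicit. Unset Printing Implicit Defensive.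

(* Write [U_L T U_R = diag(chi^m)] near [l0] and [T y_i = chi^nu_i g_i], i.e.
   [T Y = G diag(chi^nu)].  Then [X := U_R^-1 Y] satisfies
   [diag(chi^m) X = (U_L G) diag(chi^nu)]; since [X(l0)] has full column rank,
   a nonzero entry [X_jc(l0)] with [c <= k <= j] gives [nu_k <= nu_c <= m_j <= m_k],
   and [sum nu = sum m] forces [nu = m].  The upper [r x r] blocks of [X] and
   [U_L G] are then conjugate by [Delta] off [l0], so they have the same
   determinant at [l0], and the block of [U_L G(l0)] is invertible.  On the left,
   [V(l0) T(l0) = 0] makes [V(l0) U_L^-1(l0)] vanish outside its first [r]
   columns, so [B := V G] is invertible at [l0] and [V T Y = B Delta].  Finally
   [Delta^-1 - Delta^-1 (B Delta) Delta^-1 = Delta^-1 (I - B)] and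
   [Delta^-1 - (B Delta)^-1 = - Delta^-1 (I - B) B^-1], and [B], [B^-1] are
   holomorphic at [l0], so either difference is holomorphic iff the other is. *)

Lemma leq_sum_eq (I : finType) (a b : I -> nat) :
  (forall i, a i <= b i)%N -> (\sum_i a i = \sum_i b i)%N -> forall i, a i = b i.
Proof.
move=> leab eq_sum i; apply/eqP; rewrite eqn_leq leab /= leqNgt; apply/negP => lt_ab.
have : (\sum_i a i < \sum_i b i)%N.
  rewrite (bigD1 i) //= [X in (_ < X)%N](bigD1 i) //= -addSn.
  by rewrite leq_add // leq_sum.
by rewrite eq_sum ltnn.
Qed.

Section MatrixFacts.
Variable F : fieldType.

Lemma pid_mxE n k : (pid_mx k : 'M[F]_n) = diag_mx (\row_(i < n) (i < k)%N%:R).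
Proof.
apply/matrixP => i j; rewrite !mxE; case: (eqVneq i j) => [->|ne]; first by rewrite eqxx.
by rewrite mulr0n (_ : (i == j :> nat) = false) //; apply/eqP => /val_inj /eqP; rewrite (negbTE ne).
Qed.

Lemma copid_mxE n k : (copid_mx k : 'M[F]_n) = diag_mx (\row_(i < n) (k <= i)%N%:R).
Proof.
apply/matrixP => i j; rewrite /copid_mx pid_mxE !mxE.
case: (eqVneq i j) => [->|ne]; last by rewrite !mulr0n subr0.
by rewrite !mulr1n; case: (ltnP j k) => h; rewrite ?subrr ?subr0.
Qed.

Lemma mxrank_mulmx_unit n (A U W : 'M[F]_n) :
  U \in unitmx -> W \in unitmx -> \rank (U *m A *m W) = \rank A.
Proof.
by move=> uU uW; rewrite mxrankMfree ?row_free_unit // eqmxMfull ?row_full_unit.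
Qed.

Lemma col_full_nz_entry n r (X : 'M[F]_(n, r)) : \rank X = r ->
  forall k : 'I_r, exists i : 'I_r, exists j : 'I_n,
    [/\ (i <= k)%N, (k <= j)%N & X j i != 0].
Proof.
move=> rkX k.
have [/existsP[i /existsP[j /and3P[ik kj Xji]]]|/existsPn none_nz] :=
  boolP [exists i : 'I_r, [exists j : 'I_n, [&& (i <= k)%N, (k <= j)%N & X j i != 0]]].
  by exists i, j.
exfalso; have X0 (i : 'I_r) (j : 'I_n) : (i <= k)%N -> (k <= j)%N -> X j i = 0.
  move=> ik kj; apply/eqP; move/existsPn: (none_nz i) => /(_ j).
  by rewrite ik kj negbK.
have le_rn : (r <= n)%N by rewrite -rkX rank_leq_row.
pose S : 'M[F]_r := pid_mx k.+1.
have rk_first : \rank (X *m S) = k.+1.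
  rewrite -mxrank_tr trmx_mul mxrankMfree ?mxrank_tr ?rank_pid_mx //.
  by rewrite /row_free mxrank_tr rkX.
have first_top : X *m S = pid_mx k *m (X *m S).
  rewrite /S !pid_mxE mul_diag_mx mul_mx_diag; apply/matrixP => j i; rewrite !mxE.
  case: (ltnP j k) => jk; first by rewrite mul1r.
  case: (ltnP i k.+1) => ik; last by rewrite !mulr0.
  by rewrite X0 ?mul0r ?mulr0.
have : (\rank (X *m S) <= k)%N.
  rewrite first_top; apply: leq_trans (mxrankM_maxl _ _) _.
  by rewrite rank_pid_mx // ltnW // (leq_trans (ltn_ord k) le_rn).
by rewrite rk_first ltnn.
Qed.

(* [0 ^+ m j] is [1] exactly when [m j = 0], so the rank counts the vanishing [m j]. *)
Lemma pow0_diag_support n (m : nat -> nat) :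
  (forall i j : 'I_n, (i <= j)%N -> (m j <= m i)%N) ->
  forall i : 'I_n,
    (0 < m i)%N = (i < n - \rank (diag_mx (\row_(j < n) (0 : F) ^+ m j)))%N.
Proof.
set D := diag_mx _ => m_noninc i; apply/idP/idP => [m_pos | lt_i].
  have D_copid : D = copid_mx i.+1 *m D.
    rewrite copid_mxE mul_diag_mx; apply/matrixP => a b; rewrite !mxE.
    case: (ltnP i a) => [_|ai]; first by rewrite mul1r.
    by rewrite expr0n eqn0Ngt (leq_trans m_pos (m_noninc _ _ ai)) /= mulr0n mul0rn mul0r.
  have : (\rank D <= n - i.+1)%N.
    by rewrite D_copid (leq_trans (mxrankM_maxl _ _)) ?rank_copid_mx.
  by have := ltn_ord i; lia.
rewrite lt0n; apply/negP => /eqP m0.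
have D_copid : (copid_mx i : 'M[F]_n) = D *m copid_mx i.
  rewrite copid_mxE mul_mx_diag; apply/matrixP => a b; rewrite !mxE.
  case: (eqVneq a b) => [<-|_]; last by rewrite !mulr0n mul0r.
  case: (ltnP a i) => [_|ia]; first by rewrite mulr0.
  by rewrite (_ : m a = 0)%N ?expr0 ?mulr1 //; apply/eqP; rewrite -leqn0 -m0 m_noninc.
have : (n - i <= \rank D)%N.
  by rewrite -(rank_copid_mx F (ltnW (ltn_ord i))) D_copid mxrankM_maxl.
by move: lt_i; have := ltn_ord i; lia.
Qed.

Section UpperBlock.
Variables (n r : nat) (le_rn : (r <= n)%N).

Definition ublock (X : 'M[F]_(n, r)) : 'M[F]_r :=
  \matrix_(a, b) X (widen_ord le_rn a) b.

Lemma mulmx_ublock (P : 'M[F]_(r, n)) (K : 'M[F]_(n, r)) :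
  (forall a (j : 'I_n), (r <= j)%N -> P a j = 0) ->
  P *m K = (ublock P^T)^T *m ublock K.
Proof.
move=> P0; apply/matrixP => a b; rewrite !mxE (bigID (fun j : 'I_n => (j < r)%N)) /=.
rewrite [X in _ + X]big1 ?addr0 => [|j]; last by rewrite -leqNgt => /P0->; rewrite mul0r.
by rewrite (big_ord_narrow le_rn); apply: eq_bigr => j _; rewrite !mxE.
Qed.

Lemma ublock_unit (X : 'M[F]_(n, r)) :
  \rank X = r -> (forall (j : 'I_n) b, (r <= j)%N -> X j b = 0) ->
  ublock X \in unitmx.
Proof.
move=> rkX X0; have X_ublock : X^T = (ublock X)^T *m pid_mx r.
  apply/matrixP => a j; rewrite !mxE; case: (ltnP j r) => jr.
    rewrite (bigD1 (Ordinal jr)) //= big1 ?addr0 => [|b nb].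
      by rewrite !mxE eqxx jr mulr1; congr (X _ a); apply: val_inj.
    by rewrite !mxE (_ : (b == j :> nat) = false) ?mulr0 //; apply: negbTE.
  rewrite X0 // big1 // => b _; rewrite !mxE (_ : (b == j :> nat) = false) ?mulr0 //.
  by apply/eqP => bj; move: (ltn_ord b); rewrite bj ltnNge jr.
have := mxrankM_maxl (ublock X)^T (pid_mx r : 'M_(r, n)); rewrite -X_ublock !mxrank_tr rkX.
by rewrite -row_free_unit /row_free eqn_leq rank_leq_row.
Qed.

Lemma mulmx_unit_zero_cols (P : 'M[F]_(r, n)) (K : 'M[F]_(n, r)) :
  \rank P = r -> (forall a (j : 'I_n), (r <= j)%N -> P a j = 0) ->
  ublock K \in unitmx -> P *m K \in unitmx.
Proof.
move=> rkP P0 uK; rewrite mulmx_ublock // unitmx_mul uK andbT unitmx_tr.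
by apply: ublock_unit => [|j a rj]; rewrite ?mxrank_tr // mxE P0.
Qed.

End UpperBlock.

Lemma diag_mx_inv r (d : 'I_r -> F) : (forall i, d i != 0) ->
  diag_mx (\row_i (d i)^-1) *m diag_mx (\row_i d i) = 1%:M /\
  diag_mx (\row_i d i) *m diag_mx (\row_i (d i)^-1) = 1%:M.
Proof.
move=> d_nz; split; apply/matrixP => i j; rewrite mulmx_diag !mxE;
  by case: (eqVneq i j) => [->|_]; rewrite ?mulr0n // ?mulVf ?mulfV.
Qed.

Section FactorAlgebra.
Variables (r : nat) (D Dinv B : 'M[F]_r).
Hypotheses (DinvD : Dinv *m D = 1%:M) (DDinv : D *m Dinv = 1%:M).

Lemma sub_conj_factor : Dinv - Dinv *m (B *m D) *m Dinv = Dinv *m (1%:M - B).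
Proof. by rewrite -mulmxA -(mulmxA B) DDinv mulmx1 mulmxBr mulmx1. Qed.

Lemma sub_inv_factor : B \in unitmx ->
  Dinv - invmx (B *m D) = - (Dinv *m (1%:M - B)) *m invmx B.
Proof.
move=> uB; have [uD _] := mulmx1_unit DDinv.
have -> : invmx (B *m D) = Dinv *m invmx B.
  rewrite -[LHS]mul1mx -[X in X *m invmx _](_ : Dinv *m invmx B *m (B *m D) = 1%:M).
    by rewrite mulmxK // unitmx_mul uB.
  by rewrite mulmxA mulmxKV.
by rewrite mulmxBr mulmx1 opprB mulmxBl -mulmxA mulmxV // mulmx1.
Qed.

End FactorAlgebra.

End MatrixFacts.

Section ComplexDerivability.
Variable R : realType.
Local Notation C := (Cx R).
Implicit Types (f h : C -> C) (z : C).

Lemma derivable_big_sum (I : Type) (s : seq I) (P : {pred I}) (F : I -> C -> C) z :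
  (forall i, P i -> derivable (F i) z 1) ->
  derivable (fun w => \sum_(i <- s | P i) F i w) z 1.
Proof.
move=> dF; elim: s => [|i s IHs].
  by under eq_fun do rewrite big_nil; exact: derivable_cst.
under eq_fun do rewrite big_cons; case Pi: (P i); last exact: IHs.
by apply: derivableD IHs; exact: dF.
Qed.

Lemma derivable_big_prod (I : Type) (s : seq I) (P : {pred I}) (F : I -> C -> C) z :
  (forall i, P i -> derivable (F i) z 1) ->
  derivable (fun w => \prod_(i <- s | P i) F i w) z 1.
Proof.
move=> dF; elim: s => [|i s IHs].
  by under eq_fun do rewrite big_nil; exact: derivable_cst.
under eq_fun do rewrite big_cons; case Pi: (P i); last exact: IHs.
by apply: derivableM IHs; exact: dF.
Qed.

Lemma derivable_continuous f z : derivable f z 1 -> {for z, continuous f}.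
Proof. by move=> /derivable1_diffP /differentiable_continuous. Qed.

Definition derivable_mx p q (F : C -> 'M[C]_(p, q)) z :=
  forall i j, derivable (fun w => F w i j) z 1.

Lemma derivable_mxN p q (F : C -> 'M[C]_(p, q)) z :
  derivable_mx F z -> derivable_mx (fun w => - F w) z.
Proof.
by move=> dF i j; under eq_fun do rewrite mxE; exact: derivableN.
Qed.

Lemma derivable_mxM p q s (F : C -> 'M[C]_(p, q)) (G : C -> 'M[C]_(q, s)) z :
  derivable_mx F z -> derivable_mx G z -> derivable_mx (fun w => F w *m G w) z.
Proof.
move=> dF dG i j; under eq_fun do rewrite mxE.
by apply: derivable_big_sum => k _; exact: derivableM.
Qed.

Lemma derivable_det p (F : C -> 'M[C]_p) z :
  derivable_mx F z -> derivable (fun w => \det (F w)) z 1.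
Proof.
move=> dF; apply: derivable_big_sum => s _.
by apply: derivableM; [exact: derivable_cst | apply: derivable_big_prod => i _].
Qed.

Lemma derivable_mx_adj p (F : C -> 'M[C]_p) z :
  derivable_mx F z -> derivable_mx (fun w => \adj (F w)) z.
Proof.
move=> dF i j; under eq_fun do rewrite mxE /cofactor.
apply: derivableM; first exact: derivable_cst.
by apply: derivable_det => a b; under eq_fun do rewrite !mxE; exact: dF.
Qed.

Lemma derivable_mx_inv p (F : C -> 'M[C]_p) z : derivable_mx F z -> \det (F z) != 0 ->
  derivable_mx (fun w => (\det (F w))^-1 *: \adj (F w)) z.
Proof.
move=> dF detF_nz i j; under eq_fun do rewrite mxE.
by apply: derivableM; [exact: derivableV (derivable_det dF) | exact: derivable_mx_adj].
Qed.

Lemma near_ptP (l0 : C) (P : C -> Prop) : near_pt l0 P <-> \forall z \near l0, P z.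
Proof.
split => [[e [e0 Pe]] | /nbhs_ballP[e e0 Pe]].
  by apply/nbhs_ballP; exists e => // z; rewrite -ball_normE /= distrC; exact: Pe.
by exists e; split => // z z_e; apply: Pe; rewrite -ball_normE /= distrC.
Qed.

Lemma holo0_near (l0 : C) p q (F : C -> 'M[C]_(p, q)) :
  holo0 l0 F -> \forall z \near l0, derivable_mx F z.
Proof. by move=> [e [e0 dF]]; apply/near_ptP; exists e; split => // z z_e i j; exact: dF. Qed.

Lemma holo_near (Omega : set C) (l0 : C) p q (F : C -> 'M[C]_(p, q)) :
  open Omega -> Omega l0 -> holo Omega F -> \forall z \near l0, derivable_mx F z.
Proof.
move=> oOmega Omega_l0 dF; have : nbhs l0 Omega by apply: open_nbhs_nbhs.
by apply: filterS => z Omega_z i j; exact: dF.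
Qed.

Lemma near_neq0 f (l0 : C) : derivable f l0 1 -> f l0 != 0 -> \forall z \near l0, f z != 0.
Proof. by move=> /derivable_continuous f_cont f_nz; exact: cvgr_neq0 f_cont f_nz. Qed.

Lemma dnbhs_continuous_eq f h (l0 : C) : {for l0, continuous f} -> {for l0, continuous h} ->
  (\forall z \near l0^', f z = h z) -> f l0 = h l0.
Proof.
move=> /continuous_withinNx f_cont /continuous_withinNx h_cont fh.
apply: (cvg_unique (@norm_hausdorff _ C) f_cont); apply: cvg_trans h_cont.
by apply: near_eq_cvg; apply: filterS fh => z ->.
Qed.

Lemma chi0_neq0 (l0 : C) z : z != l0 -> chi0 l0 z != 0.
Proof. by rewrite /chi0 subr_eq0. Qed.

Lemma derivable_chi0X (l0 : C) k z : derivable (fun w => chi0 l0 w ^+ k) z 1.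
Proof.
rewrite /chi0 -exprfctE; apply: derivableX.
by apply: derivableB; [exact: derivable_id | exact: derivable_cst].
Qed.

Lemma chi0_pow_vanish f h (l0 : C) a b : (a < b)%N ->
  derivable f l0 1 -> derivable h l0 1 ->
  (\forall z \near l0^', chi0 l0 z ^+ a * f z = h z * chi0 l0 z ^+ b) -> f l0 = 0.
Proof.
move=> lt_ab df dh fh.
have -> : 0 = h l0 * chi0 l0 l0 ^+ (b - a).
  by rewrite /chi0 subrr expr0n subn_eq0 leqNgt lt_ab mulr0.
apply: (@dnbhs_continuous_eq _ (fun z => h z * chi0 l0 z ^+ (b - a))).
- exact: derivable_continuous df.
- by apply: derivable_continuous; apply: derivableM dh _; exact: derivable_chi0X.
apply: filterS2 fh (nbhs_dnbhs_neq l0) => z fhz z_l0.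
apply: (mulfI (expf_neq0 a (chi0_neq0 z_l0))).
by rewrite fhz mulrCA -exprD subnKC // ltnW.
Qed.

Lemma mero_eqP (l0 : C) p q (M1 M2 : C -> 'M[C]_(p, q)) :
  mero_eq l0 M1 M2 <-> exists H, (\forall z \near l0, derivable_mx H z) /\
                                 \forall z \near l0^', M2 z - M1 z = H z.
Proof.
split => [[e [e0 [H [dH eqH]]]] | [H [dH eqH]]].
  exists H; split; first by apply/near_ptP; exists e; split => // z z_e i j; exact: dH.
  apply/(near_ptP l0 (fun z => z != l0 -> M2 z - M1 z = H z)); exists e; split => // z z_e z_l0.
  by apply: eqH; rewrite z_e normr_gt0 subr_eq0 z_l0.
have [e [e0 He]] : near_pt l0 (fun z => derivable_mx H z /\ (z != l0 -> M2 z - M1 z = H z)).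
  by apply/near_ptP; apply: filterS2 dH eqH => z; exact: conj.
exists e; split => //; exists H; split => [i j z /He[] // | z /andP[z_l0 /He[_]]].
by apply; rewrite normr_gt0 subr_eq0 in z_l0.
Qed.

End ComplexDerivability.

Section Delta.
Variable R : realType.
Local Notation C := (Cx R).

(* With [d := m] on ['I_r] this is the paper's [Delta]; on ['I_n] it is the
   diagonal of the local Smith form [U_L T U_R]. *)
Definition Delta (l0 : C) p (d : 'I_p -> nat) (z : C) : 'M[C]_p :=
  diag_mx (\row_i chi0 l0 z ^+ d i).

Lemma Delta_invK (l0 z : C) r (m : nat -> nat) : z != l0 ->
  Delta_inv l0 r m z *m Delta l0 (fun i : 'I_r => m i) z = 1%:M /\
  Delta l0 (fun i : 'I_r => m i) z *m Delta_inv l0 r m z = 1%:M.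
Proof.
move=> z_l0; apply: (diag_mx_inv (d := fun i : 'I_r => chi0 l0 z ^+ m i)) => i.
by rewrite expf_neq0 ?chi0_neq0.
Qed.

Lemma det_Delta_neq0 (l0 z : C) p (d : 'I_p -> nat) : z != l0 -> \det (Delta l0 d z) != 0.
Proof.
by move=> z_l0; rewrite det_diag; apply/prodf_neq0 => i _; rewrite mxE expf_neq0 ?chi0_neq0.
Qed.

Lemma Delta_entry (l0 z : C) p q (d : 'I_p -> nat) (e : 'I_q -> nat) (X K : 'M[C]_(p, q)) :
  Delta l0 d z *m X = K *m Delta l0 e z ->
  forall j i, chi0 l0 z ^+ d j * X j i = K j i * chi0 l0 z ^+ e i.
Proof.
by move=> /matrixP XK j i; move: (XK j i); rewrite mul_diag_mx mul_mx_diag !mxE.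
Qed.

End Delta.

Section MeromorphicFactor.
Variables (R : realType) (l0 : Cx R) (r : nat) (m : nat -> nat) (A B : Cx R -> 'M[Cx R]_r).
Local Notation Dm := (Delta l0 (fun i : 'I_r => m i)).
Local Notation Dinv := (Delta_inv l0 r m).
Hypotheses (dB : \forall z \near l0, derivable_mx B z) (detB_nz : \det (B l0) != 0)
  (A_factor : \forall z \near l0, A z = B z *m Dm z).

Let detB_near : \forall z \near l0, \det (B z) != 0.
Proof. exact: near_neq0 (derivable_det (nbhs_singleton dB)) detB_nz. Qed.

Lemma mero_invertible_factor : mero_invertible l0 A.
Proof.
move=> /near_ptP detA0; apply: (@filter_const _ (dnbhs l0)).
apply: filterS3 (nbhs_dnbhs (filterI A_factor detA0)) (nbhs_dnbhs detB_near) (nbhs_dnbhs_neq l0).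
move=> z [Az detAz] Bz z_l0; move/eqP: detAz; rewrite Az det_mulmx.
by rewrite mulf_eq0 (negbTE Bz) (negbTE (det_Delta_neq0 _ z_l0)).
Qed.

Lemma mero_eq_Delta_factor :
  mero_eq l0 (fun z => Dinv z *m A z *m Dinv z) Dinv <-> mero_eq l0 (fun z => invmx (A z)) Dinv.
Proof.
pose Binv z := (\det (B z))^-1 *: \adj (B z).
have dBinv : \forall z \near l0, derivable_mx Binv z.
  by apply: filterS2 dB detB_near => z; exact: derivable_mx_inv.
have factor : \forall z \near l0^', B z \in unitmx /\ [/\ Binv z = invmx (B z),
    Dinv z - Dinv z *m A z *m Dinv z = Dinv z *m (1%:M - B z) &
    Dinv z - invmx (A z) = - (Dinv z *m (1%:M - B z)) *m invmx (B z)].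
  apply: filterS3 (nbhs_dnbhs A_factor) (nbhs_dnbhs detB_near) (nbhs_dnbhs_neq l0) => z -> Bz z_l0.
  have uB : B z \in unitmx by rewrite unitmxE unitfE.
  have [DinvD DDinv] := @Delta_invK _ l0 z r m z_l0.
  by split; [|split; [rewrite /invmx uB | exact: sub_conj_factor | exact: sub_inv_factor]].
split => /mero_eqP[H [dH eqH]]; apply/mero_eqP.
  exists (fun z => - H z *m Binv z); split.
    by apply: filterS2 dH dBinv => z dHz dBz; apply: derivable_mxM (derivable_mxN _) _.
  by apply: filterS2 eqH factor => z <- [_ [-> -> ->]].
exists (fun z => - H z *m B z); split.
  by apply: filterS2 dH dB => z dHz dBz; apply: derivable_mxM (derivable_mxN _) _.
apply: filterS2 eqH factor => z <- [uB [_ -> ->]].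
by rewrite !mulNmx opprK mulmxKV.
Qed.

End MeromorphicFactor.

Lemma zero_order_cols (R : realType) (l0 : Cx R) n r (F : Cx R -> 'M[Cx R]_(n, r))
    (nu : 'I_r -> nat) :
  (forall i, zero_order l0 (fun z => col i (F z)) (nu i)) ->
  exists G : Cx R -> 'M[Cx R]_(n, r), (\forall z \near l0, derivable_mx G z) /\
    \forall z \near l0, F z = G z *m Delta l0 nu z.
Proof.
move=> /(_ _)/cid hg; pose g i := sval (hg i).
have dg i : \forall z \near l0, derivable_mx (g i) z.
  by have [/holo0_near] := svalP (hg i).
have Fg i : \forall z \near l0, col i (F z) = chi0 l0 z ^+ nu i *: g i z.
  by have [_ [_ /near_ptP]] := svalP (hg i).
exists (fun z => \matrix_(a, b) g b z a 0); split.
  apply: filterS (@filter_forall _ _ (fun i z => derivable_mx (g i) z) _ _ dg) => z dgz a b.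
  by under eq_fun do rewrite mxE; exact: dgz.
apply: filterS (@filter_forall _ _ (fun i z => col i (F z) = chi0 l0 z ^+ nu i *: g i z) _ _ Fg).
move=> z Fgz.
apply/matrixP => a b; rewrite mul_mx_diag !mxE mulrC.
by have /matrixP/(_ a 0) := Fgz b; rewrite !mxE.
Qed.

Section RightCanonical.
Variables (R : realType) (l0 : Cx R) (n r : nat) (le_rn : (r <= n)%N) (m : nat -> nat).
Variables (X K : Cx R -> 'M[Cx R]_(n, r)) (nu : 'I_r -> nat).
Hypotheses (m_noninc : forall i j : 'I_n, (i <= j)%N -> (m j <= m i)%N)
  (m_pos : forall i : 'I_n, (0 < m i)%N = (i < r)%N)
  (nu_noninc : forall i j : 'I_r, (i <= j)%N -> (nu j <= nu i)%N)
  (sum_nu : (\sum_(i < r) nu i = \sum_(i < r) m i)%N)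
  (dX : derivable_mx X l0) (dK : derivable_mx K l0) (rkX : \rank (X l0) = r)
  (XK : \forall z \near l0, Delta l0 (fun i : 'I_n => m i) z *m X z = K z *m Delta l0 nu z).

Lemma right_multiplicities (i : 'I_r) : nu i = m i.
Proof.
have le_nu_m (k : 'I_r) : (nu k <= m k)%N.
  have [c [j [ck kj Xjc]]] := col_full_nz_entry rkX k.
  (* Otherwise [chi0 ^+ (nu c - m j)] would divide [X j c], which is nonzero at [l0]. *)
  have le_nu_mj : (nu c <= m j)%N.
    rewrite leqNgt; apply/negP => lt_mj_nu; move/eqP: Xjc; apply.
    apply: (chi0_pow_vanish lt_mj_nu (@dX j c) (@dK j c)).
    by apply: nbhs_dnbhs; apply: filterS XK => z /Delta_entry.
  rewrite (leq_trans (nu_noninc ck)) // (leq_trans le_nu_mj) //.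
  exact: (@m_noninc (widen_ord le_rn k) j kj).
exact: (leq_sum_eq (b := fun i : 'I_r => m i) le_nu_m sum_nu).
Qed.

Lemma ublock_right_unit : ublock le_rn (K l0) \in unitmx.
Proof.
pose Dr := Delta l0 (fun i : 'I_r => m i).
have XK_m : \forall z \near l0, forall (j : 'I_n) (i : 'I_r),
    chi0 l0 z ^+ m j * X z j i = K z j i * chi0 l0 z ^+ m i.
  by apply: filterS XK => z /Delta_entry XKz j i; rewrite XKz right_multiplicities.
have X0 (j : 'I_n) (b : 'I_r) : (r <= j)%N -> X l0 j b = 0.
  move=> rj; have mj0 : m j = 0%N by apply/eqP; rewrite -leqn0 leqNgt m_pos -leqNgt.
  have mb_pos : (0 < m b)%N by move: (m_pos (widen_ord le_rn b)); rewrite /= ltn_ord.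
  have := nbhs_singleton XK_m j b; rewrite mj0 expr0 mul1r => ->.
  by rewrite /chi0 subrr expr0n eqn0Ngt mb_pos mulr0.
have detXK : \det (ublock le_rn (X l0)) = \det (ublock le_rn (K l0)).
  apply: (@dnbhs_continuous_eq _ (fun z => \det (ublock le_rn (X z)))
                                 (fun z => \det (ublock le_rn (K z)))).
  - apply/derivable_continuous/derivable_det => a b.
    by under eq_fun do rewrite mxE; exact: (@dX (widen_ord le_rn a) b).
  - apply/derivable_continuous/derivable_det => a b.
    by under eq_fun do rewrite mxE; exact: (@dK (widen_ord le_rn a) b).
  apply: filterS2 (nbhs_dnbhs XK_m) (nbhs_dnbhs_neq l0) => z XKz z_l0.
  have DXK : Dr z *m ublock le_rn (X z) = ublock le_rn (K z) *m Dr z.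
    apply/matrixP => a b; rewrite /Dr /Delta mul_diag_mx mul_mx_diag !mxE.
    exact: (XKz (widen_ord le_rn a) b).
  apply: (mulfI (det_Delta_neq0 (fun i : 'I_r => m i) z_l0)).
  by rewrite -det_mulmx DXK det_mulmx mulrC.
by rewrite unitmxE unitfE -detXK -unitfE -unitmxE ublock_unit.
Qed.

End RightCanonical.

Section CanonicalFactorization.
Variables (R : realType) (Omega : set (Cx R)) (l0 : Cx R) (n r : nat) (m : nat -> nat).
Variables (T UL ULi UR URi : Cx R -> 'M[Cx R]_n).
Variables (V : Cx R -> 'M[Cx R]_(r, n)) (Y : Cx R -> 'M[Cx R]_(n, r)).
Local Notation Dn := (Delta l0 (fun i : 'I_n => m i)).
Local Notation Dr := (Delta l0 (fun i : 'I_r => m i)).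
Hypotheses (oOmega : open Omega) (Omega_l0 : Omega l0)
  (r_def : r = (n - \rank (T l0))%N)
  (m_noninc : forall i j : 'I_n, (i <= j)%N -> (m j <= m i)%N)
  (dUL : derivable_mx UL l0) (dURi : derivable_mx URi l0)
  (ULiUL : ULi l0 *m UL l0 = 1%:M) (URURi : \forall z \near l0, UR z *m URi z = 1%:M)
  (smith : \forall z \near l0, UL z *m T z *m UR z = Dn z)
  (hV : left_canonical Omega l0 T m V) (hY : right_canonical Omega l0 T m Y).

Let le_rn : (r <= n)%N. Proof. by rewrite r_def leq_subr. Qed.

Lemma partial_multiplicity_pos (i : 'I_n) : (0 < m i)%N = (i < r)%N.
Proof.
rewrite (@pow0_diag_support (Cx R) n m m_noninc i) r_def; congr (_ < _ - _)%N.
have [_ uUL] := mulmx1_unit ULiUL; have [uUR _] := mulmx1_unit (nbhs_singleton URURi).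
by rewrite -(mxrank_mulmx_unit (T l0) uUL uUR) (nbhs_singleton smith) /Delta /chi0 subrr.
Qed.

Lemma right_canonical_factor : exists G : Cx R -> 'M[Cx R]_(n, r),
  [/\ \forall z \near l0, derivable_mx G z, \forall z \near l0, T z *m Y z = G z *m Dr z
    & ublock le_rn (UL l0 *m G l0) \in unitmx].
Proof.
have [dY [_ [rkY [nu [nu_order [sum_nu nu_noninc]]]]]] := hY.
have [G [dG TYG]] : exists G : Cx R -> 'M[Cx R]_(n, r), (\forall z \near l0, derivable_mx G z) /\
    \forall z \near l0, T z *m Y z = G z *m Delta l0 nu z.
  apply: zero_order_cols => i.
  have -> : (fun z => col i (T z *m Y z)) = (fun z => T z *m col i (Y z)).
    by apply/funext => z; rewrite !colE mulmxA.
  exact: nu_order.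
pose X z := URi z *m Y z; pose K z := UL z *m G z.
have XK : \forall z \near l0, Dn z *m X z = K z *m Delta l0 nu z.
  apply: filterS3 URURi smith TYG => z URURiz smithz TYGz.
  by rewrite -smithz /X /K -!mulmxA (mulmxA (UR z)) URURiz mul1mx TYGz.
have dX : derivable_mx X l0.
  exact: derivable_mxM dURi (nbhs_singleton (holo_near oOmega Omega_l0 dY)).
have dK : derivable_mx K l0 := derivable_mxM dUL (nbhs_singleton dG).
have rkX : \rank (X l0) = r.
  apply/eqP; rewrite eqn_leq rank_leq_col -{1}rkY.
  by rewrite -[Y l0]mul1mx -(nbhs_singleton URURi) -mulmxA mxrankM_maxr.
have nu_m := right_multiplicities le_rn m_noninc nu_noninc sum_nu dX dK rkX XK.
have Dnu : Delta l0 nu = Dr.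
  by apply/funext => z; congr diag_mx; apply/rowP => i; rewrite !mxE nu_m.
exists G; split => //; first by rewrite -Dnu.
apply: (ublock_right_unit le_rn m_noninc partial_multiplicity_pos nu_noninc sum_nu dX dK rkX XK).
Qed.

Lemma left_canonical_block :
  \rank (V l0 *m ULi l0) = r /\
  forall a (j : 'I_n), (r <= j)%N -> (V l0 *m ULi l0) a j = 0.
Proof.
have [_ [roots [rkV _]]] := hV.
split.
  apply/eqP; rewrite eqn_leq rank_leq_row -{1}rkV.
  by rewrite {1}(_ : V l0 = V l0 *m ULi l0 *m UL l0) ?mxrankM_maxl // -mulmxA ULiUL mulmx1.
have VT0 : V l0 *m T l0 = 0.
  by apply/row_matrixP => a; rewrite row_mul row0; have [_ []] := roots a.
have VULiD : V l0 *m ULi l0 *m Dn l0 = 0.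
  by rewrite -(nbhs_singleton smith) !mulmxA -(mulmxA _ (ULi l0)) ULiUL mulmx1 VT0 !mul0mx.
move=> a j rj; have mj0 : m j = 0%N.
  by apply/eqP; rewrite -leqn0 leqNgt partial_multiplicity_pos -leqNgt.
have /matrixP/(_ a j) := VULiD.
by rewrite /Delta mul_mx_diag !mxE mj0 expr0 mulr1.
Qed.

Lemma canonical_factorization : exists B : Cx R -> 'M[Cx R]_r,
  [/\ \forall z \near l0, derivable_mx B z, \det (B l0) != 0
    & \forall z \near l0, V z *m T z *m Y z = B z *m Dr z].
Proof.
have [G [dG TYG uK]] := right_canonical_factor; have [rkP P0] := left_canonical_block.
have [dV _] := hV.
exists (fun z => V z *m G z); split.
- by apply: filterS2 (holo_near oOmega Omega_l0 dV) dG => z; exact: derivable_mxM.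
- rewrite -unitfE -unitmxE -[V l0]mulmx1 -ULiUL mulmxA -(mulmxA _ (UL l0)).
  exact: mulmx_unit_zero_cols.
- by apply: filterS TYG => z TYGz; rewrite -mulmxA TYGz mulmxA.
Qed.

End CanonicalFactorization.

Local Close Scope classical_set_scope.
Unset Implicit Arguments.

Theorem mainTheorem6 (R : realType) (Omega : set (Cx R)) (l0 : Cx R)
  (n r : nat) (T : Cx R -> 'M[Cx R]_n) (m : nat -> nat)
  (V : Cx R -> 'M[Cx R]_(r, n)) (Y : Cx R -> 'M[Cx R]_(n, r)) :
  open Omega -> Omega l0 ->
  holo Omega T ->
  ~ (forall z, Omega z -> \det (T z) = 0) ->
  \det (T l0) = 0 ->
  r = (n - \rank (T l0))%N ->
  partial_multiplicities l0 T m ->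
  left_canonical Omega l0 T m V ->
  right_canonical Omega l0 T m Y ->
  mero_invertible l0 (fun z => V z *m T z *m Y z) /\
  (mero_eq l0
     (fun z => Delta_inv l0 r m z *m (V z *m T z *m Y z) *m Delta_inv l0 r m z)
     (Delta_inv l0 r m)
   <->
   mero_eq l0 (fun z => invmx (V z *m T z *m Y z)) (Delta_inv l0 r m)).
Proof.
move=> oOmega Omega_l0 _ _ _ r_def [m_noninc [UL [UR [[dUL [ULi [_ /near_ptP invUL]]]
  [[_ [URi [dURi /near_ptP invUR]]] /near_ptP smith]]]]] hV hY.
have [B [dB detB_nz VTY]] := canonical_factorization oOmega Omega_l0 r_def m_noninc
  (nbhs_singleton (holo0_near dUL)) (nbhs_singleton (holo0_near dURi))
  (nbhs_singleton invUL).2 (filterS (fun z => @proj1 _ _) invUR) smith hV hY.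
split; first exact: mero_invertible_factor dB detB_nz VTY.
exact: mero_eq_Delta_factor dB detB_nz VTY.
Qed.
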